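(* For all integers $0\le k\le n$, the number of directed paths in $\Gamma$ from the node $(k,0)$ to the node $(n,n)$ is $$\pi(n,n,k)=\binom{n}{k}E_{n-k}.$$
   Context: Let $\Gamma$ be the directed graph whose nodes are the pairs $(n,k)$ of integers with $n\ge k\ge 0$, and whose edges are, for all $n\ge k\ge 0$: $(n+1,k)\to(n+1,k+1)$ and $(n,n-k)\to(n+1,k+1)$. $\pi(n,k,i)$ denotes the number of directed paths in $\Gamma$ from $(i,0)$ to $(n,k)$, where the trivial path counts when $(i,0)=(n,k)$. A permutation $\sigma_1\cdots\sigma_n$ of $\{1,\ldots,n\}$ is down-up if $\sigma_1>\sigma_2<\sigma_3>\cdots$; $E_n$ is the number of such permutations, with $E_0=E_1=1$. *)

From mathcomp Require Import all_boot all_order all_fingroup.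
Set Implicit Arguments. Unset Strict Implicit. Unset Printing Implicit Defensive.

Definition gnode (x : nat * nat) : bool := x.2 <= x.1.

(* Edges of Gamma, for all n >= k >= 0:
   (n+1,k) -> (n+1,k+1)          : x = (a,b), y = (a,b+1), with a = n+1, b = k, i.e. b < a
   (n,n-k) -> (n+1,k+1)          : x = (a, a-j), y = (a+1, j+1), j <= a;
                                   equivalently x.2 <= x.1 and y.2 = (x.1 - x.2) + 1. *)
Definition gedge (x y : nat * nat) : bool :=
  [&& y.1 == x.1, y.2 == x.2.+1 & x.2 < x.1]
  || [&& y.1 == x.1.+1, x.2 <= x.1 & y.2 == (x.1 - x.2).+1].

(* A directed path in Gamma from u to v, given as its full list of vertices
   (the trivial path is [:: u] when u = v). *)
Definition gpath (u v : nat * nat) (p : seq (nat * nat)) : bool :=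
  match p with
  | [::] => false
  | x :: q => [&& x == u, path gedge x q, last x q == v & all gnode p]
  end.

(* Down-up permutations of {0,...,n-1} (order-isomorphic to {1,...,n}):
   s_0 > s_1 < s_2 > ... *)
Definition downup n (s : 'S_n) : bool :=
  [forall i : 'I_n, forall j : 'I_n,
     (nat_of_ord j == (nat_of_ord i).+1) ==>
       (if odd i then s i < s j else s j < s i)].

Definition Euler_E (n : nat) : nat := #|[set s : 'S_n | downup s]|.

From mathcomp Require Import all_boot all_order all_fingroup.
From mathcomp Require Import zify.
Set Implicit Arguments. Unset Strict Implicit. Unset Printing Implicit Defensive.

(* A path into (n, m+1) arrives either from (n, m) or from (n-1, n-1-m), so the
   numbers of paths from (k, 0) obey the boustrophedon recurrence
   f(n+1, m+1) = f(n+1, m) + f(n, n-m), and a solution of it is determined by its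
   first column, here [n = k].  Pascal's rule in both binomials shows that
   sum_s C(m, s) C(n-m, k-s) E(n-k, m-s), with E the Entringer numbers, satisfies
   the same recurrence and the same first column; on the diagonal m = n only s = k
   survives.  Finally E(N, N) = E_N: sorting the down-up arrangements of an
   (N+1)-set by their first letter, those starting with the letter of rank r are
   counted by E(N, r), and the up-down ones by E(N, N - r). *)

Definition seidel (f : nat -> nat -> nat) : Prop :=
  forall n m, m <= n -> f n.+1 m.+1 = f n.+1 m + f n (n - m).

Lemma seidel_unique f g : seidel f -> seidel g -> (forall n, f n 0 = g n 0) ->
  forall n m, m <= n -> f n m = g n m.
Proof.
move=> sf sg f0; elim=> [|n IHn] m.
  by rewrite leqn0 => /eqP ->.
elim: m => [|m IHm] hm //.
by rewrite sf // sg // IHm ?(ltnW hm) // IHn ?leq_subr.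
Qed.

Lemma gedge0 w n : gedge w (n, 0) = false.
Proof. by case: w => a b; rewrite /gedge /= !(andbF, andFb). Qed.

Lemma gedgeS w n m : m <= n ->
  gedge w (n.+1, m.+1) = (w == (n.+1, m)) || (w == (n, n - m)).
Proof.
case: w => a b hm; rewrite /gedge /= !xpair_eqE !eqSS.
apply/idP/idP.
- case/orP => [/and3P [/eqP <- /eqP -> _] | /and3P [/eqP -> hb /eqP ->]].
  + by rewrite !eqxx.
  + by rewrite subKn // !eqxx orbT.
- case/orP => [/andP [/eqP -> /eqP ->] | /andP [/eqP -> /eqP ->]].
  + by rewrite !eqxx ltnS hm.
  + by rewrite !eqxx leq_subr subKn ?eqxx ?orbT.
Qed.

Lemma gpath_last u v p : gpath u v p -> last (0, 0) p = v.
Proof. by case: p => [|x q] //= /and4P [_ _ /eqP -> _]. Qed.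

Lemma gpath_rcons u w v q : gpath u w q -> gedge w v -> gnode v -> gpath u v (rcons q v).
Proof.
case: q => [|x q] //= /and4P [/eqP-> hp /eqP hl ha] he hv.
by rewrite eqxx rcons_path hp hl he last_rcons eqxx /= all_rcons /= hv.
Qed.

Lemma gpath_lastP u v p : gpath u v p ->
  (p = [:: u] /\ u = v) \/ (exists q w, [/\ p = rcons q v, gpath u w q & gedge w v]).
Proof.
case: p => [|x q] //= /and4P [/eqP-> hp /eqP hl ha].
case/lastP: q hp hl ha => [|q y] hp hl ha; first by left; move: hl => /= ->.
move: hp ha; rewrite rcons_path all_rcons last_rcons in hl *.
move=> /andP [hp he] /and3P [hx _ hq].
right; exists (u :: q), (last u q); split; rewrite -?hl //.
by rewrite /= eqxx hp eqxx /= hx hq.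
Qed.

Lemma gpath_col0 u n p : gpath u (n, 0) p = (p == [:: u]) && (u == (n, 0)).
Proof.
apply/idP/andP => [/gpath_lastP [[-> ->] | [q [w [_ _]]]] | [/eqP -> /eqP ->]].
- by rewrite !eqxx.
- by rewrite gedge0.
- by rewrite /= !eqxx.
Qed.

(* [paths k n m] lists the paths from (k, 0) to (n, m), grouped by their
   penultimate vertex (n, m-1) or (n-1, n-m). *)
Fixpoint paths (k n : nat) : nat -> seq (seq (nat * nat)) :=
  let prev := if n is n'.+1 then fun m => paths k n' (n' - m) else fun _ => [::] in
  fix paths_n m := match m with
   | 0 => if n == k then [:: [:: (k, 0)]] else [::]
   | m.+1 => map (rcons^~ (n, m.+1)) (paths_n m ++ prev m)
  end.

Lemma paths_col0 k n : paths k n 0 = if n == k then [:: [:: (k, 0)]] else [::].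
Proof. by case: n. Qed.

Lemma pathsSS k n m :
  paths k n.+1 m.+1 = map (rcons^~ (n.+1, m.+1)) (paths k n.+1 m ++ paths k n (n - m)).
Proof. by []. Qed.

Lemma mem_paths_col0 k n p : (p \in paths k n 0) = gpath (k, 0) (n, 0) p.
Proof.
rewrite paths_col0 gpath_col0 xpair_eqE andbT eq_sym.
by case: (k == n); rewrite ?inE ?andbT ?andbF.
Qed.

Lemma mem_paths k n m : m <= n -> forall p, (p \in paths k n m) = gpath (k, 0) (n, m) p.
Proof.
elim: n m => [|n IHn] m; elim: m => [|m IHm] // hm p; rewrite ?mem_paths_col0 //.
rewrite pathsSS; apply/mapP/idP => [[q] | /gpath_lastP [[_ []] // | [q [w [-> hq]]]]].
- rewrite mem_cat => /orP [] hq ->.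
  + by apply: (@gpath_rcons _ (n.+1, m)); rewrite ?gedgeS ?eqxx // -IHm // ltnW.
  + by apply: (@gpath_rcons _ (n, n - m)); rewrite ?gedgeS ?eqxx ?orbT // -IHn // leq_subr.
rewrite gedgeS // => /orP [] /eqP ?; subst w; exists q => //; rewrite mem_cat.
- by rewrite IHm ?hq // ltnW.
- by rewrite IHn ?hq ?orbT // leq_subr.
Qed.

Lemma uniq_paths k n m : m <= n -> uniq (paths k n m).
Proof.
have col0 n' : uniq (paths k n' 0) by rewrite paths_col0; case: ifP.
elim: n m => [|n IHn] m; elim: m => [|m IHm] hm; rewrite ?col0 //.
rewrite pathsSS map_inj_uniq => [|x y /rcons_inj [] //].
rewrite cat_uniq IHm ?IHn ?leq_subr ?(ltnW hm) // andbT; apply/hasPn => q.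
rewrite !mem_paths ?leq_subr ?(ltnW hm) // => /gpath_last endq.
by apply/negP => /gpath_last; rewrite endq => -[]; lia.
Qed.

Lemma seidel_size_paths k : seidel (fun n m => size (paths k n m)).
Proof. by move=> n m _; rewrite pathsSS size_map size_cat. Qed.

Fixpoint entringer (n m : nat) : nat :=
  if n is n'.+1 then \sum_(i < m) entringer n' (n' - i) else m == 0.

Lemma entringerSE n m : entringer n.+1 m = \sum_(i < m) entringer n (n - i).
Proof. by []. Qed.

Lemma entringerS0 n : entringer n.+1 0 = 0.
Proof. exact: big_ord0. Qed.

Lemma entringerSS n m : entringer n.+1 m.+1 = entringer n.+1 m + entringer n (n - m).
Proof. exact: big_ord_recr. Qed.

Lemma entringer_col0 n : entringer n 0 = (n == 0).
Proof. by case: n => [|n]; rewrite ?entringerS0. Qed.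

Arguments entringer : simpl never.

Lemma sum_binS_l j k (X : nat -> nat) :
  \sum_(s < k.+1) 'C(j.+1, s) * X s =
  \sum_(s < k.+1) 'C(j, s) * X s + \sum_(s < k) 'C(j, s) * X s.+1.
Proof.
rewrite !big_ord_recl /= !bin0 -addnA; congr (_ + _).
by rewrite -big_split /=; apply: eq_bigr => i _; rewrite binS mulnDl.
Qed.

Lemma sum_binS_r a k (Y : nat -> nat) :
  \sum_(s < k.+1) 'C(a.+1, k - s) * Y s =
  \sum_(s < k.+1) 'C(a, k - s) * Y s + \sum_(s < k) 'C(a, k - s.+1) * Y s.
Proof.
rewrite !big_ord_recr /= subnn !bin0 addnAC; congr (_ + _).
rewrite -big_split /=; apply: eq_bigr => i _.
by rewrite -(subnSK (ltn_ord i)) binS mulnDl.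
Qed.

Definition paths_count k n m :=
  \sum_(s < k.+1) 'C(m, s) * 'C(n - m, k - s) * entringer (n - k) (m - s).

Lemma paths_count_col0 k n : paths_count k n 0 = (n == k).
Proof.
rewrite /paths_count big_ord_recl big1 => [|s _]; last by rewrite bin0n.
rewrite /= bin0 mul1n !subn0 addn0 entringer_col0 subn_eq0.
case: (ltngtP n k) => [lt|gt|->]; last by rewrite binn.
- by rewrite bin_small.
- by rewrite /nat_of_bool muln0.
Qed.

Lemma paths_count_lt k n m : n < k -> m <= n -> paths_count k n m = 0.
Proof.
move=> hn hm; rewrite /paths_count big1 // => [[s hs]] _ /=.
have [hsm|hsm] := leqP s m; last by rewrite (bin_small hsm).
by rewrite (@bin_small (n - m) (k - s)) ?muln0 ?mul0n //; lia.
Qed.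

Lemma paths_count_row k m : m <= k -> paths_count k k m = 1.
Proof.
move=> hm; rewrite /paths_count (bigD1 (Ordinal (hm : m < k.+1))) //= big1 ?addn0.
  by rewrite !subnn entringer_col0 !binn.
move=> [s hs] /=; rewrite -(inj_eq val_inj) /= => hne.
have [hsm|hsm] := ltnP s m; last first.
  by rewrite bin_small // ltn_neqAle eq_sym hne hsm.
by rewrite (@bin_small (k - m) (k - s)) ?muln0 ?mul0n //; lia.
Qed.

Lemma paths_count_recr k n j : k <= n -> j <= n ->
  paths_count k n.+1 j.+1 = paths_count k n.+1 j + paths_count k n (n - j).
Proof.
move=> hk hj; rewrite /paths_count subSS (subSn hk) (subSn hj).
set N := n - k.
have -> : \sum_(s < k.+1) 'C(j.+1, s) * 'C(n - j, k - s) * entringer N.+1 (j.+1 - s) =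
    \sum_(s < k.+1) 'C(j, s) * ('C(n - j, k - s) * entringer N.+1 (j.+1 - s)) +
    \sum_(s < k) 'C(j, s) * ('C(n - j, k - s.+1) * entringer N.+1 (j - s)).
  rewrite -(sum_binS_l j k (fun s => 'C(n - j, k - s) * entringer N.+1 (j.+1 - s))).
  by apply: eq_bigr => s _; rewrite mulnA.
have -> : \sum_(s < k.+1) 'C(j, s) * 'C((n - j).+1, k - s) * entringer N.+1 (j - s) =
    \sum_(s < k.+1) 'C(n - j, k - s) * ('C(j, s) * entringer N.+1 (j - s)) +
    \sum_(s < k) 'C(j, s) * ('C(n - j, k - s.+1) * entringer N.+1 (j - s)).
  transitivity (\sum_(s < k.+1) 'C((n - j).+1, k - s) * ('C(j, s) * entringer N.+1 (j - s))).
    by apply: eq_bigr => s _; rewrite mulnCA mulnA.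
  rewrite (sum_binS_r _ _ (fun s => 'C(j, s) * entringer N.+1 (j - s))).
  by congr (_ + _); apply: eq_bigr => s _; rewrite mulnCA.
(* What remains is, by the Entringer recurrence, the sum for [paths_count k n (n - j)]
   reindexed by s |-> k - s. *)
rewrite addnAC; congr (_ + _).
rewrite [X in _ = _ + X](reindex_inj rev_ord_inj) /= -big_split /=.
apply: eq_bigr => [[s hs]] _ /=.
rewrite subSS subKn // (subKn (hs : s <= k)).
have [hsj|hsj] := leqP s j; last by rewrite (bin_small hsj) !mul0n muln0.
have [hks|hks] := leqP (k - s) (n - j); last by rewrite (bin_small hks) !muln0 mul0n.
rewrite (subSn hsj) entringerSS !mulnDr mulnCA; congr (_ + _).
rewrite mulnA [_ * 'C(j, s)]mulnC; congr (_ * entringer _ _); rewrite /N; lia.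
Qed.

Lemma seidel_paths_count k : seidel (paths_count k).
Proof.
move=> n m hm; have [hk|] := leqP k n; first exact: paths_count_recr.
rewrite leq_eqVlt => /orP [/eqP <- | hk].
- by rewrite !paths_count_row ?paths_count_lt ?leq_subr // ltnW.
- by rewrite !paths_count_lt ?leq_subr // ltnW.
Qed.

Lemma paths_count_diag k n : k <= n -> paths_count k n n = 'C(n, k) * entringer (n - k) (n - k).
Proof.
move=> hk; rewrite /paths_count (bigD1 ord_max) //= big1 ?addn0.
  by rewrite !subnn bin0 muln1.
move=> [s hs]; rewrite -(inj_eq val_inj) /= => hne.
by rewrite subnn bin0n subn_eq0 leqNgt ltn_neqAle hne -ltnS hs muln0 mul0n.
Qed.

Lemma size_paths k n m : m <= n -> size (paths k n m) = paths_count k n m.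
Proof.
apply: seidel_unique (seidel_size_paths k) (seidel_paths_count k) _ n m => n'.
by rewrite paths_col0 paths_count_col0; case: eqP.
Qed.

Lemma count_permutations_head (T : eqType) (P : pred (seq T)) (X : seq T) : 0 < size X ->
  count P (permutations X) =
  \sum_(x <- undup X) count (fun w => P (x :: w)) (permutations (rem x X)).
Proof.
move=> X_gt0; rewrite (seq.permP (permutationsE X_gt0)) count_flatten sumnE !big_map.
by apply: eq_bigr => x _; rewrite count_map.
Qed.

Section Rank.
Variables (T : eqType) (lt : rel T).
Hypotheses (lt_irr : irreflexive lt) (lt_trans : transitive lt)
  (lt_total : forall a b, a != b -> lt a b || lt b a).

Lemma rank_lt Y y z : uniq Y -> y \in Y -> lt y z -> count (lt^~ y) Y < count (lt^~ z) Y.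
Proof.
move=> uY hy hyz.
have e : count (predU (lt^~ y) (pred1 y)) Y = (count (lt^~ y) Y).+1.
  have := count_predUI (lt^~ y) (pred1 y) Y.
  rewrite (@eq_count _ (predI _ _) pred0) => [|w /=]; last first.
    by case: eqVneq => [->|]; rewrite ?lt_irr ?andbF.
  by rewrite count_pred0 addn0 count_uniq_mem // hy addn1.
rewrite -e; apply: sub_count => w /=.
by case/orP => [h | /eqP ->]; [apply: lt_trans h hyz | ].
Qed.

Lemma rank_sum Y x (g : nat -> nat) : uniq Y ->
  \sum_(y <- Y | lt y x) g (count (lt^~ y) Y) = \sum_(i < count (lt^~ x) Y) g i.
Proof.
move=> uY; rewrite -big_filter -(big_map (fun y => count (lt^~ y) Y) xpredT g).
rewrite -(big_mkord xpredT g) /index_iota subn0; apply: perm_big.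
set S := map _ _.
have uS : uniq S.
  rewrite map_inj_in_uniq ?filter_uniq // => a b.
  rewrite !mem_filter => /andP [_ ha] /andP [_ hb] e.
  apply/eqP/negP => /negP /lt_total /orP [] h.
    by move: (rank_lt uY ha h); rewrite e ltnn.
  by move: (rank_lt uY hb h); rewrite e ltnn.
have sub : {subset S <= iota 0 (count (lt^~ x) Y)}.
  move=> i /mapP [y]; rewrite mem_filter => /andP [hyx hy] ->.
  by rewrite mem_iota add0n; apply: rank_lt.
have sz : size (iota 0 (count (lt^~ x) Y)) <= size S.
  by rewrite size_iota size_map size_filter.
have [_ eqS] := uniq_min_size uS sub sz.
by apply: uniq_perm => //; apply: iota_uniq.
Qed.

End Rank.

Fixpoint alternating (down : bool) (w : seq nat) : bool :=
  if w is x :: ((y :: _) as w') then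
    (if down then y < x else x < y) && alternating (~~ down) w'
  else true.

Lemma count_alternating_cons down x Y : 0 < size Y -> uniq Y ->
  count (fun w => alternating down (x :: w)) (permutations Y) =
  \sum_(y <- Y | if down then y < x else x < y)
     count (fun w => alternating (~~ down) (y :: w)) (permutations (rem y Y)).
Proof.
move=> Y_gt0 uY; rewrite count_permutations_head // undup_id // [RHS]big_mkcond.
apply: eq_bigr => y _; case: ifP => cmp.
- by apply: eq_count => w /=; rewrite cmp.
- by rewrite (@eq_count _ _ pred0) ?count_pred0 // => w /=; rewrite cmp.
Qed.

Lemma count_lt_gt_mem z Y :
  count (fun y => y < z) Y + count (fun y => z < y) Y + count_mem z Y = size Y.
Proof.
elim: Y => [|y Y IH] //=; rewrite -[in RHS]IH.
by case: (ltngtP y z) => h /=; rewrite ?add0n ?add1n ?addSn ?addnS.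
Qed.

Lemma count_alternating_head N X x : uniq X -> size X = N.+1 -> x \in X ->
  let r := count (fun y => y < x) X in
  count (fun w => alternating true (x :: w)) (permutations (rem x X)) = entringer N r /\
  count (fun w => alternating false (x :: w)) (permutations (rem x X)) = entringer N (N - r).
Proof.
elim: N X x => [|N IH] X x uX sX hx r.
  case: X sX uX hx @r => [|a [|b X]] // _ _; rewrite inE => /eqP ->.
  by rewrite /= eqxx ltnn.
set Y := rem x X.
have uY : uniq Y by apply: rem_uniq.
have sY : size Y = N.+1 by rewrite size_rem // sX.
have hxY : x \notin Y by rewrite mem_rem_uniqF.
have rY : r = count (fun y => y < x) Y.
  by rewrite /r (seq.permP (perm_to_rem hx)) /= ltnn.
have countY := count_lt_gt_mem x Y; rewrite count_uniq_mem // (negPf hxY) sY -rY in countY.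
rewrite !count_alternating_cons ?sY //; split.
- rewrite big_seq_cond.
  under eq_bigr => y /andP [hy _] do rewrite (IH Y y uY sY hy).2.
  have lt_total a b : a != b -> (a < b) || (b < a) by rewrite neq_ltn.
  rewrite -big_seq_cond rY entringerSE.
  exact: (@rank_sum _ (fun a b => a < b) ltnn ltn_trans lt_total _ _
            (fun i => entringer N (N - i))).
- rewrite big_seq_cond.
  under eq_bigr => y /andP [hy _] do rewrite (IH Y y uY sY hy).1.
  have rank_gt y : y \in Y -> count (fun z => z < y) Y = N - count (fun z => y < z) Y.
    move=> hy; have := count_lt_gt_mem y Y; rewrite count_uniq_mem // hy sY; lia.
  under eq_bigr => y /andP [hy _] do rewrite (rank_gt y hy).
  rewrite -big_seq_cond.
  have gt_irr : irreflexive (fun a b : nat => b < a) by move=> a; rewrite ltnn.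
  have gt_trans : transitive (fun a b : nat => b < a).
    by move=> a b c h1 h2; apply: ltn_trans h2 h1.
  have gt_total a b : a != b -> (b < a) || (a < b) by rewrite neq_ltn orbC.
  rewrite (@rank_sum _ (fun a b => b < a) gt_irr gt_trans gt_total _ _
             (fun i => entringer N (N - i))) //.
  have -> : count (fun y => x < y) Y = N.+1 - r by lia.
  by rewrite [RHS]entringerSE.
Qed.

Lemma alternating_nth down w : alternating down w <->
  (forall i, i.+1 < size w ->
    if down (+) odd i then nth 0 w i.+1 < nth 0 w i else nth 0 w i < nth 0 w i.+1).
Proof.
elim: w down => [|x [|y w] IH] down //=; split.
- case/andP => hxy /IH alt_w [|i] hi; first by rewrite addbF.
  by have := alt_w i hi; rewrite addbN addNb.
- move=> h; apply/andP; split; first by have := h 0 isT; rewrite addbF.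
  by apply/IH => i hi; have := h i.+1 hi; rewrite /= addbN addNb.
Qed.

Definition perm_seq N (s : 'S_N) : seq nat := [seq val (s i) | i <- enum 'I_N].

Lemma size_perm_seq N (s : 'S_N) : size (perm_seq s) = N.
Proof. by rewrite size_map size_enum_ord. Qed.

Lemma nth_perm_seq N (s : 'S_N) (i : 'I_N) : nth 0 (perm_seq s) i = s i.
Proof. by rewrite (nth_map i) ?size_enum_ord // nth_ord_enum. Qed.

Lemma perm_seq_inj N : injective (@perm_seq N).
Proof.
move=> s1 s2 eq_s; apply/permP => i; apply: val_inj.
by rewrite /= -!nth_perm_seq eq_s.
Qed.

Lemma downup_alternating N (s : 'S_N) : downup s = alternating true (perm_seq s).
Proof.
apply/idP/idP => [/forallP downup_s | /alternating_nth alt_s].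
- apply/alternating_nth => i; rewrite size_perm_seq => hi1.
  have hi := ltnW hi1.
  move/forallP/(_ (Ordinal hi1))/implyP/(_ (eqxx _)): (downup_s (Ordinal hi)).
  rewrite -[i]/(nat_of_ord (Ordinal hi)) -[i.+1]/(nat_of_ord (Ordinal hi1)).
  by rewrite !nth_perm_seq /= if_neg.
- apply/forallP => i; apply/forallP => j; apply/implyP => /eqP j_eq.
  have := alt_s i; rewrite size_perm_seq -j_eq => /(_ (ltn_ord j)).
  by rewrite !nth_perm_seq if_neg.
Qed.

Lemma perm_seq_iota N (s : 'S_N) : perm_eq (perm_seq s) (iota 0 N).
Proof.
rewrite /perm_seq (map_comp val s) -val_enum_ord perm_map //.
apply: uniq_perm => [||i]; last by rewrite mem_enum -[i](permKV s) map_f ?mem_enum.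
- by rewrite map_inj_uniq ?enum_uniq //; apply: perm_inj.
- exact: enum_uniq.
Qed.

Lemma perm_seq_permutations N :
  perm_eq (map (@perm_seq N) (enum 'S_N)) (permutations (iota 0 N)).
Proof.
have uniq_seqs : uniq (map (@perm_seq N) (enum 'S_N)).
  by rewrite map_inj_uniq ?enum_uniq //; apply: perm_seq_inj.
have sub_seqs : {subset map (@perm_seq N) (enum 'S_N) <= permutations (iota 0 N)}.
  by move=> w /mapP [s _ ->]; rewrite mem_permutations perm_seq_iota.
have size_seqs : size (permutations (iota 0 N)) <= size (map (@perm_seq N) (enum 'S_N)).
  by rewrite size_permutations ?iota_uniq // size_map -cardE card_Sn size_iota.
have [_ eq_seqs] := uniq_min_size uniq_seqs sub_seqs size_seqs.
exact: uniq_perm (permutations_uniq _) eq_seqs.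
Qed.

Lemma Euler_E_count N : Euler_E N = count (alternating true) (permutations (iota 0 N)).
Proof.
rewrite -(seq.permP (perm_seq_permutations N)) count_map.
rewrite (eq_count (a2 := @downup N)) => [|s]; last by rewrite /= downup_alternating.
by rewrite enumT /Euler_E cardsE cardE /enum_mem size_filter.
Qed.

Lemma count_iota_lt x n : x <= n -> count (fun y => y < x) (iota 0 n) = x.
Proof. by move=> le_xn; rewrite -size_filter (filter_iota_ltn 0 le_xn) size_iota. Qed.

Lemma Euler_E_entringer N : Euler_E N = entringer N N.
Proof.
rewrite Euler_E_count; case: N => [|N]; first by [].
rewrite count_permutations_head ?size_iota // undup_id ?iota_uniq //.
rewrite (eq_big_seq (entringer N)) => [|x x_in]; last first.
  have [-> _] := count_alternating_head (iota_uniq 0 N.+1) (size_iota _ _) x_in.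
  by rewrite count_iota_lt //; move: x_in; rewrite mem_iota add0n => /ltnW.
rewrite -[iota 0 N.+1]/(index_iota 0 N.+1) big_mkord entringerSE.
rewrite (reindex_inj rev_ord_inj) /=.
by apply: eq_bigr => i _; rewrite subSS.
Qed.

Theorem proposition2 (n k : nat) (hk : k <= n) :
  exists s : seq (seq (nat * nat)),
    [/\ uniq s,
        (forall p, (p \in s) = gpath (k, 0) (n, n) p)
      & size s = 'C(n, k) * Euler_E (n - k)].
Proof.
exists (paths k n n); split.
- exact: uniq_paths.
- exact: mem_paths.
- by rewrite size_paths // paths_count_diag // Euler_E_entringer.
Qed.
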